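(* Let $\theta\in\mathbb R$ and $\epsilon>0$. If $U$ is a Clifford+$T$ operator and $\lambda$ a unit scalar with $\|R_z(\theta)-\lambda U\|\le\epsilon$, then there exist $\lambda'\in\{1,e^{i\pi/8}\}$ and a Clifford+$T$ operator $U'$ with the same $T$-count as $U$ such that $\|R_z(\theta)-\lambda'U'\|\le\epsilon$. Thus, in the approximate synthesis problem for $z$-rotations up to a phase, it suffices to consider only the scalars $\lambda=1$ and $\lambda=e^{i\pi/8}$.
   Context: Let $\omega=e^{i\pi/4}$, $H=\frac{1}{\sqrt2}\begin{bmatrix}1&1\\1&-1\end{bmatrix}$, $S=\begin{bmatrix}1&0\\0&i\end{bmatrix}$, $T=\begin{bmatrix}1&0\\0&\omega\end{bmatrix}$. A Clifford+$T$ operator is an element of the group generated by $\omega I,H,S,T$; its $T$-count is the minimal number of occurrences of $T$ or $T^{-1}$ in a word in these generators and their inverses representing it. $R_z(\theta)=\begin{bmatrix}e^{-i\theta/2}&0\\0&e^{i\theta/2}\end{bmatrix}$. The approximate synthesis problem for $z$-rotations up to a phase asks, given $\theta$ and $\epsilon$, for a Clifford+$T$ operator $U$ (of smallest possible $T$-count) and a unit scalar $\lambda$ with $\|R_z(\theta)-\lambda U\|\le\epsilon$, where $\|\cdot\|$ is the operator norm. *)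

From HB Require Import structures.
From mathcomp Require Import all_boot all_order all_algebra.
From mathcomp Require Import complex.
From mathcomp Require Import classical_sets reals trigo.
Set Implicit Arguments. Unset Strict Implicit. Unset Printing Implicit Defensive.
Import Order.TTheory GRing.Theory Num.Theory.
Local Open Scope ring_scope.
Local Open Scope complex_scope.

Section CliffordT.
Variable R : realType.
Local Notation C := R[i].

Definition expi (x : R) : C := (cos x) +i* (sin x).

Definition omega : C := expi (pi / 4).

Definition mxH : 'M[C]_2 :=
  ((Num.sqrt (2 : R))^-1)%:C *: \matrix_(i < 2, j < 2)
     (if (i == 1) && (j == 1) then -1 else 1).
Definition mxS : 'M[C]_2 :=
  \matrix_(i < 2, j < 2) (if i == j then (if i == 1 then 'i else 1) else 0).
Definition mxT : 'M[C]_2 :=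
  \matrix_(i < 2, j < 2) (if i == j then (if i == 1 then omega else 1) else 0).
Definition mxOmegaI : 'M[C]_2 := omega%:M.

Definition Rz (theta : R) : 'M[C]_2 :=
  \matrix_(i < 2, j < 2)
    (if i == j then (if i == 1 then expi (theta / 2) else expi (- (theta / 2)))
     else 0).

Inductive gen := GOmega | GH | GS | GT.

Definition gen_mx (g : gen) : 'M[C]_2 :=
  match g with GOmega => mxOmegaI | GH => mxH | GS => mxS | GT => mxT end.

Definition letter := (gen * bool)%type.

Definition letter_mx (l : letter) : 'M[C]_2 :=
  if l.2 then invmx (gen_mx l.1) else gen_mx l.1.

Definition word_mx (w : seq letter) : 'M[C]_2 :=
  foldr (fun l M => letter_mx l *m M) 1%:M w.

Definition word_tcount (w : seq letter) : nat :=
  count (fun l : letter => if l.1 is GT then true else false) w.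

Definition clifford_t (U : 'M[C]_2) : Prop := exists w, word_mx w = U.

Definition is_tcount (U : 'M[C]_2) (n : nat) : Prop :=
  (exists w, word_mx w = U /\ word_tcount w = n) /\
  (forall w, word_mx w = U -> (n <= word_tcount w)%N).

Definition cmod (z : C) : R := Num.sqrt (complex.Re z ^+ 2 + complex.Im z ^+ 2).

Definition vnorm (v : 'cV[C]_2) : R :=
  Num.sqrt (cmod (v 0 0) ^+ 2 + cmod (v 1 0) ^+ 2).

Definition opnorm (A : 'M[C]_2) : R :=
  sup [set vnorm (A *m v) | v in [set v : 'cV[C]_2 | vnorm v = 1]].

End CliffordT.

From HB Require Import structures.
From mathcomp Require Import all_boot all_order all_algebra.
From mathcomp Require Import complex.
From mathcomp Require Import classical_sets reals trigo.
From mathcomp Require Import ring lra.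
Import Order.TTheory GRing.Theory Num.Theory.
Local Open Scope ring_scope.
Local Open Scope complex_scope.
Set Implicit Arguments. Unset Strict Implicit. Unset Printing Implicit Defensive.

(* Write P = R_z(theta).  Every Clifford+T operator U is unitary with det U a power of
   omega, and P - s U = P (1 - A) with A = s P^* U.  If the unit scalar s puts A in SU(2),
   then (1 - A)^* (1 - A) = (2 - tr A) I, so every unit vector is stretched by exactly
   sqrt (2 - tr A) and ||P - s U|| = sqrt (2 - tr A).  For any other unit scalar lambda the
   squared norms of the two columns of P - lambda U add up to 4 - 2 Re(lambda / s) tr A,
   which is at least 2 (2 - tr A) when tr A >= 0, so ||P - s U|| <= ||P - lambda U||.
   The phases s = zeta^m, zeta = e^{i pi/8}, put A in SU(2) for m = 7k and m = 7k + 8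
   (where det U = omega^k), and these two choices give opposite traces.  Finally
   zeta^m = zeta^(m mod 2) omega^(m div 2), and omega^j U is Clifford+T with the same
   T-count as U. *)

Section CliffordTPhase.
Variable R : realType.
Local Notation C := R[i].

Lemma complex_eq (a b c d : R) : a = c -> b = d -> a +i* b = c +i* d :> C.
Proof. by move=> -> ->. Qed.

Lemma expiD x y : expi (x + y) = expi x * expi y :> C.
Proof. by rewrite /expi sinD cosD /=; apply: complex_eq; ring. Qed.

Lemma expi0 : expi 0 = 1 :> C.
Proof. by rewrite /expi cos0 sin0. Qed.

Lemma expi_pi : expi pi = -1 :> C.
Proof. by rewrite /expi cospi sinpi; apply: complex_eq; rewrite ?oppr0. Qed.

Lemma expiMn x n : expi x ^+ n = expi (x *+ n) :> C.
Proof.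
elim: n => [|n IHn]; first by rewrite expr0 mulr0n expi0.
by rewrite exprS IHn mulrS expiD.
Qed.

Lemma expi_mulJ x : expi x * (expi x)^* = 1 :> C.
Proof. by rewrite /expi /=; apply: complex_eq; rewrite -?(cos2Dsin2 x); ring. Qed.

Lemma cmodE (z : C) : (cmod z)%:C = `|z|.
Proof. by rewrite normc_def. Qed.

Lemma cmod_ge0 (z : C) : 0 <= cmod z.
Proof. exact: sqrtr_ge0. Qed.

Lemma cmodD (x y : C) : cmod (x + y) <= cmod x + cmod y.
Proof. by rewrite -lecR rmorphD /= !cmodE ler_normD. Qed.

Lemma cmodM (x y : C) : cmod (x * y) = cmod x * cmod y.
Proof. by apply: complexI; rewrite rmorphM /= !cmodE normrM. Qed.

Lemma cmod1_mulJ (z : C) : cmod z = 1 -> z * z^* = 1.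
Proof. by move=> hz; rewrite -sqr_normc -cmodE hz expr1n. Qed.

Lemma Re_le1 (z : C) : z * z^* = 1 -> complex.Re z <= 1.
Proof. by case: z => a b /= /(congr1 (@complex.Re R)) /=; nra. Qed.

Lemma mulJ_unit (x y : C) :
  x * x^* = 1 -> y * y^* = 1 -> x * y^* * (x * y^*)^* = 1.
Proof.
move=> hx hy; rewrite rmorphM /= conjCK mulrACA hx mul1r mulrC; exact: hy.
Qed.

Definition ctmx m n (A : 'M[C]_(m, n)) : 'M[C]_(n, m) := map_mx Num.conj A^T.

Lemma ctmx_mul m n p (A : 'M[C]_(m, n)) (B : 'M[C]_(n, p)) :
  ctmx (A *m B) = ctmx B *m ctmx A.
Proof. by rewrite /ctmx trmx_mul map_mxM. Qed.

Lemma ctmxD m n (A B : 'M[C]_(m, n)) : ctmx (A + B) = ctmx A + ctmx B.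
Proof. by apply/matrixP => i j; rewrite !mxE rmorphD. Qed.

Lemma ctmxN m n (A : 'M[C]_(m, n)) : ctmx (- A) = - ctmx A.
Proof. by apply/matrixP => i j; rewrite !mxE rmorphN. Qed.

Lemma ctmxZ m n a (A : 'M[C]_(m, n)) : ctmx (a *: A) = a^* *: ctmx A.
Proof. by apply/matrixP => i j; rewrite !mxE rmorphM. Qed.

Lemma ctmxK m n (A : 'M[C]_(m, n)) : ctmx (ctmx A) = A.
Proof. by apply/matrixP => i j; rewrite !mxE conjCK. Qed.

Lemma ctmx_scalar n (a : C) : ctmx (a%:M : 'M[C]_n) = (a^*)%:M.
Proof. by rewrite /ctmx tr_scalar_mx map_scalar_mx. Qed.

Lemma mxtrace_ctmx n (A : 'M[C]_n) : \tr (ctmx A) = (\tr A)^*.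
Proof. by rewrite /ctmx (trace_map_mx Num.conj) mxtrace_tr. Qed.

Lemma big_ord2 (F : 'I_2 -> C) : \sum_(k < 2) F k = F 0 + F 1.
Proof. by rewrite big_ord_recr big_ord1; congr (F _ + F _); apply: val_inj. Qed.

Lemma ord2P (i : 'I_2) : i = 0 \/ i = 1.
Proof. case: i => [[|[|//]]] Hi; [left|right]; exact: val_inj. Qed.

Lemma adj_mx2 (A : 'M[C]_2) : \adj A =
  \matrix_(i < 2, j < 2) (if i == 0 then (if j == 0 then A 1 1 else - A 0 1)
                          else (if j == 0 then - A 1 0 else A 0 0)).
Proof.
have lift0 : lift (0 : 'I_2) (0 : 'I_1) = 1 by apply: val_inj.
have lift1 : lift (1 : 'I_2) (0 : 'I_1) = 0 by apply: val_inj.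
apply/matrixP => i j; rewrite !mxE /cofactor det_mx11 !mxE.
by have [->|->] := ord2P i; have [->|->] := ord2P j;
  rewrite /= ?(lift0, lift1) -signr_odd /= ?expr0 ?expr1 ?mul1r ?mulN1r.
Qed.

Lemma det_mx2 (A : 'M[C]_2) : \det A = A 0 0 * A 1 1 - A 0 1 * A 1 0.
Proof.
have := congr1 (fun M : 'M[C]_2 => M 0 0) (mul_mx_adj A).
by rewrite adj_mx2 !mxE big_ord2 !mxE /= mulr1n mulrN => <-.
Qed.

Definition unitarymx n (A : 'M[C]_n) := ctmx A *m A = 1%:M.

Lemma unitarymx1 n : unitarymx (1%:M : 'M[C]_n).
Proof. by rewrite /unitarymx ctmx_scalar conjC1 mul1mx. Qed.

Lemma unitarymx_ctmx n (A : 'M[C]_n) : unitarymx A -> unitarymx (ctmx A).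
Proof. by move=> hA; rewrite /unitarymx ctmxK; apply: mulmx1C. Qed.

Lemma unitarymx_mul n (A B : 'M[C]_n) :
  unitarymx A -> unitarymx B -> unitarymx (A *m B).
Proof.
by move=> hA hB; rewrite /unitarymx ctmx_mul mulmxA -(mulmxA _ (ctmx A)) hA mulmx1.
Qed.

Lemma unitarymxZ n a (A : 'M[C]_n) :
  a * a^* = 1 -> unitarymx A -> unitarymx (a *: A).
Proof.
move=> ha hA.
by rewrite /unitarymx ctmxZ -scalemxAl -scalemxAr scalerA mulrC ha scale1r.
Qed.

Lemma invmx_unitary n (A : 'M[C]_n) : unitarymx A -> invmx A = ctmx A.
Proof.
move=> hA; have [_ hAu] := mulmx1_unit hA.
by rewrite -[invmx A]mul1mx -hA -mulmxA mulmxV // mulmx1.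
Qed.

Lemma su_ctmx_adj n (A : 'M[C]_n) : unitarymx A -> \det A = 1 -> ctmx A = \adj A.
Proof.
by move=> hA hd; rewrite -[ctmx A]mulmx1 -hd -mul_mx_adj mulmxA hA mul1mx.
Qed.

Lemma su2_add_ctmx (A : 'M[C]_2) :
  unitarymx A -> \det A = 1 -> A + ctmx A = (\tr A)%:M.
Proof.
move=> hA hd; rewrite su_ctmx_adj // adj_mx2; apply/matrixP => i j.
rewrite !mxE /mxtrace big_ord2.
by have [->|->] := ord2P i; have [->|->] := ord2P j;
  rewrite /= ?addr0 ?subrr ?mulr1n ?mulr0n // addrC.
Qed.

Lemma su2_trace_real (A : 'M[C]_2) :
  unitarymx A -> \det A = 1 -> (complex.Re (\tr A))%:C = \tr A.
Proof.
move=> hA hd; have := congr1 mxtrace (su2_add_ctmx hA hd).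
rewrite mxtraceD mxtrace_ctmx mxtrace_scalar ReJ_add => htr.
(* [ReJ_add] and [addcJ] are stated with [conjc], which is [Num.conj] on [R[i]] unfolded. *)
by rewrite -[conjc _]/(Num.conj _) htr -[_ *+ 2]mulr_natr mulfK // pnatr_eq0.
Qed.

Local Notation e i := (delta_mx i 0 : 'cV[C]_2).

Lemma vnorm_ge0 (v : 'cV[C]_2) : 0 <= vnorm v.
Proof. exact: sqrtr_ge0. Qed.

Lemma vnorm_sqr (v : 'cV[C]_2) : (vnorm v ^+ 2)%:C = (ctmx v *m v) 0 0.
Proof.
rewrite /vnorm sqr_sqrtr ?addr_ge0 ?sqr_ge0 // rmorphD !rmorphXn /= !cmodE.
by rewrite !sqr_normc !mxE big_ord2 !mxE [v 0 0 * _]mulrC [v 1 0 * _]mulrC.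
Qed.

Lemma vnorm_unitary_mulmx (P : 'M[C]_2) v : unitarymx P -> vnorm (P *m v) = vnorm v.
Proof.
move=> hP; apply/eqP; rewrite -(eqrXn2 (_ : 0 < 2)%N) ?vnorm_ge0 //; apply/eqP/complexI.
by rewrite !vnorm_sqr ctmx_mul mulmxA -(mulmxA (ctmx v)) hP mulmx1.
Qed.

Lemma ctmx_delta m n (i : 'I_m) (j : 'I_n) : ctmx (delta_mx i j) = delta_mx j i.
Proof.
by apply/matrixP => k l; rewrite !mxE conjC_nat andbC.
Qed.

Lemma vnorm_col_sqr (X : 'M[C]_2) i :
  (vnorm (X *m e i) ^+ 2)%:C = (ctmx X *m X) i i.
Proof.
by rewrite vnorm_sqr ctmx_mul ctmx_delta mulmxA -(mulmxA (delta_mx 0 i)) -rowE -colE !mxE.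
Qed.

Lemma vnorm_delta (i : 'I_2) : vnorm (e i) = 1.
Proof.
apply/eqP; rewrite -(eqrXn2 (_ : 0 < 2)%N) ?vnorm_ge0 // expr1n; apply/eqP/complexI.
by rewrite vnorm_sqr ctmx_delta mul_delta_mx mxE !eqxx.
Qed.

Lemma vnorm_cols_sqr (X : 'M[C]_2) :
  (vnorm (X *m e 0) ^+ 2 + vnorm (X *m e 1) ^+ 2)%:C = \tr (ctmx X *m X).
Proof. by rewrite /mxtrace big_ord2 -(vnorm_col_sqr X 0) -(vnorm_col_sqr X 1) rmorphD. Qed.

Lemma unit_coord_le1 (v : 'cV[C]_2) i : vnorm v = 1 -> cmod (v i 0) <= 1.
Proof.
move=> hv; have : vnorm v ^+ 2 = 1 by rewrite hv expr1n.
rewrite /vnorm sqr_sqrtr ?addr_ge0 ?sqr_ge0 //.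
have := cmod_ge0 (v 0 0); have := cmod_ge0 (v 1 0).
by have [->|->] := ord2P i; nra.
Qed.

Lemma opnorm_has_ubound (M : 'M[C]_2) :
  has_ubound [set vnorm (M *m v) | v in [set v | vnorm v = 1]].
Proof.
pose b (i : 'I_2) := cmod (M i 0) + cmod (M i 1).
exists (b 0 + b 1) => _ [v /= hv <-].
have hc i : cmod ((M *m v) i 0) <= b i.
  rewrite mxE big_ord2; apply: le_trans (cmodD _ _) _; rewrite !cmodM /b.
  have := unit_coord_le1 0 hv; have := unit_coord_le1 1 hv.
  have := cmod_ge0 (v 0 0); have := cmod_ge0 (v 1 0).
  have := cmod_ge0 (M i 0); have := cmod_ge0 (M i 1).
  nra.
have := hc 0; have := hc 1.
have := cmod_ge0 ((M *m v) 0 0); have := cmod_ge0 ((M *m v) 1 0).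
move=> g1 g0 h1 h0; have hb : 0 <= b 0 + b 1 by nra.
rewrite /vnorm -[b 0 + b 1]ger0_norm // -sqrtr_sqr ler_sqrt ?sqr_ge0 //; nra.
Qed.

Lemma opnorm_const (X : 'M[C]_2) s :
  (forall v, vnorm v = 1 -> vnorm (X *m v) = s) -> opnorm X = s.
Proof.
move=> hX; rewrite /opnorm -[RHS]sup1; congr sup.
apply/seteqP; split=> [_ [v hv <-]|_ ->]; first by rewrite /= hX.
by exists (e 0); [exact: vnorm_delta | rewrite hX // vnorm_delta].
Qed.

Lemma vnorm_col_le_opnorm (X : 'M[C]_2) i : vnorm (X *m e i) <= opnorm X.
Proof.
by apply: (ub_le_sup (opnorm_has_ubound X)); exists (e i) => //; exact: vnorm_delta.
Qed.

Lemma sub_unitary_factor n (P U : 'M[C]_n) mu : unitarymx P ->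
  P - mu *: U = P *m (1%:M - mu *: (ctmx P *m U)).
Proof. by move=> hP; rewrite mulmxBr mulmx1 -scalemxAr mulmxA (mulmx1C hP) mul1mx. Qed.

Lemma ctmx_1subr_mul n (A : 'M[C]_n) : unitarymx A ->
  ctmx (1%:M - A) *m (1%:M - A) = (1 + 1)%:M - (A + ctmx A).
Proof.
move=> hA; rewrite ctmxD ctmxN ctmx_scalar conjC1 mulmxBl !mulmxBr !mul1mx mulmx1 hA.
by rewrite [(1 + 1)%:M]raddfD /= opprB addrACA opprD.
Qed.

Lemma vnorm_1subr_su2 (A : 'M[C]_2) v : unitarymx A -> \det A = 1 -> vnorm v = 1 ->
  vnorm ((1%:M - A) *m v) = Num.sqrt (2 - complex.Re (\tr A)).
Proof.
move=> hA hd hv.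
have hsq : vnorm ((1%:M - A) *m v) ^+ 2 = 2 - complex.Re (\tr A).
  apply: complexI; rewrite vnorm_sqr ctmx_mul mulmxA -(mulmxA (ctmx v)).
  rewrite ctmx_1subr_mul // su2_add_ctmx // -su2_trace_real // -raddfB /=.
  rewrite mul_mx_scalar -scalemxAl mxE -vnorm_sqr hv expr1n mulr1.
  by rewrite rmorphB /= rmorph_nat.
by rewrite -hsq sqrtr_sqr ger0_norm // vnorm_ge0.
Qed.

Lemma Re_mul_real (z : C) (r : R) : complex.Re (z * r%:C) = complex.Re z * r.
Proof. by case: z => a b /=; ring. Qed.

Lemma le_addr_cases (t a b : R) : t + t <= a + b -> t <= a \/ t <= b.
Proof. by move=> h; have [|] := orP (le_total t a); [left | right; lra]. Qed.

Lemma su2_col_lower (A : 'M[C]_2) nu :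
  unitarymx A -> \det A = 1 -> nu * nu^* = 1 -> 0 <= complex.Re (\tr A) ->
  exists i, Num.sqrt (2 - complex.Re (\tr A)) <= vnorm ((1%:M - nu *: A) *m e i).
Proof.
move=> hA hd hnu; have := su2_trace_real hA hd.
move: (complex.Re (\tr A)) => r htr hr.
have hsum : vnorm ((1%:M - nu *: A) *m e 0) ^+ 2 + vnorm ((1%:M - nu *: A) *m e 1) ^+ 2 =
    2 + 2 - 2 * (complex.Re nu * r).
  apply: complexI; rewrite vnorm_cols_sqr ctmx_1subr_mul; last exact: unitarymxZ.
  rewrite raddfB /= mxtraceD mxtrace_scalar mxtrace_ctmx mxtraceZ -htr.
  rewrite -[_ + _^*]/(_ + conjc _) addcJ Re_mul_real.
  by rewrite !rmorphB !rmorphM /= rmorph_nat rmorphD /= rmorph_nat -mulr2n.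
have hcr : complex.Re nu * r <= r by rewrite -[leRHS]mul1r ler_wpM2r // Re_le1.
have : (2 - r) + (2 - r) <=
    vnorm ((1%:M - nu *: A) *m e 0) ^+ 2 + vnorm ((1%:M - nu *: A) *m e 1) ^+ 2.
  by rewrite hsum; move: hcr; clear; lra.
case/le_addr_cases => hi; [exists 0 | exists 1];
  by rewrite -[vnorm _]ger0_norm ?vnorm_ge0 // -sqrtr_sqr ler_sqrt ?sqr_ge0.
Qed.

Lemma opnorm_sub_phase_le (P U : 'M[C]_2) sigma lambda :
  unitarymx P -> unitarymx U -> sigma * sigma^* = 1 -> lambda * lambda^* = 1 ->
  \det (sigma *: (ctmx P *m U)) = 1 ->
  0 <= complex.Re (\tr (sigma *: (ctmx P *m U))) ->
  opnorm (P - sigma *: U) <= opnorm (P - lambda *: U).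
Proof.
move=> hP hU hs hl; set A := sigma *: (ctmx P *m U) => hd hr.
have hA : unitarymx A by apply: unitarymxZ => //; apply: unitarymx_mul => //; exact: unitarymx_ctmx.
have -> : opnorm (P - sigma *: U) = Num.sqrt (2 - complex.Re (\tr A)).
  apply: opnorm_const => v hv.
  by rewrite sub_unitary_factor // -mulmxA vnorm_unitary_mulmx // vnorm_1subr_su2.
have [i hi] := su2_col_lower hA hd (mulJ_unit hl hs) hr.
apply: (le_trans hi); rewrite -(vnorm_unitary_mulmx _ hP) mulmxA.
have -> : lambda * sigma^* *: A = lambda *: (ctmx P *m U).
  by rewrite /A scalerA -mulrA [sigma^* * sigma]mulrC hs mulr1.
by rewrite -sub_unitary_factor //; exact: vnorm_col_le_opnorm.
Qed.

Local Notation om := (@omega R).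
Local Notation zeta := (expi (pi / 8) : C).

Lemma zeta_sqr : zeta ^+ 2 = om.
Proof. by rewrite expiMn /omega; congr expi; rewrite -mulr_natr; field. Qed.

Lemma zeta8 : zeta ^+ 8 = -1.
Proof.
by rewrite expiMn (_ : pi / 8 *+ 8 = pi) ?expi_pi // -mulr_natr; field.
Qed.

Lemma zeta16 : zeta ^+ 16 = 1.
Proof. by rewrite (exprM _ 8 2) zeta8 sqrrN expr1n. Qed.

Lemma omega_sqr : om ^+ 2 = 'i.
Proof.
rewrite /omega expiMn (_ : pi / 4 *+ 2 = pi / 2); last by rewrite -mulr_natr; field.
by rewrite /expi cos_pihalf sin_pihalf.
Qed.

Lemma omega4 : om ^+ 4 = -1.
Proof. by rewrite -zeta_sqr -exprM zeta8. Qed.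

Lemma omega8 : om ^+ 8 = 1.
Proof. by rewrite -zeta_sqr -exprM mulnC zeta16. Qed.

Lemma omega_mulJ : om * om^* = 1.
Proof. exact: expi_mulJ. Qed.

Lemma omega_neq0 : om != 0.
Proof.
by apply/eqP => h; have := omega_mulJ; rewrite h mul0r => /eqP; rewrite eq_sym oner_eq0.
Qed.

Lemma zetaX_mulJ m : zeta ^+ m * (zeta ^+ m)^* = 1.
Proof. rewrite expiMn; exact: expi_mulJ. Qed.

Lemma zetaX_split m : zeta ^+ odd m * om ^+ m./2 = zeta ^+ m.
Proof. by rewrite -zeta_sqr -exprM -exprD mul2n odd_double_half. Qed.

Definition diag2 (a b : C) : 'M[C]_2 :=
  \matrix_(i < 2, j < 2) (if i == j then (if i == 1 then b else a) else 0).

Lemma diag2_unitary a b : a * a^* = 1 -> b * b^* = 1 -> unitarymx (diag2 a b).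
Proof.
move=> ha hb; apply/matrixP => i j; rewrite !mxE big_ord2 !mxE.
by have [->|->] := ord2P i; have [->|->] := ord2P j;
  rewrite /= ?conjC0 ?mulr0 ?mul0r ?addr0 ?add0r // mulrC.
Qed.

Lemma det_diag2 a b : \det (diag2 a b) = a * b.
Proof. by rewrite det_mx2 !mxE /= mul0r subr0. Qed.

Lemma ctmx_det n (A : 'M[C]_n) : \det (ctmx A) = (\det A)^*.
Proof. by rewrite /ctmx (det_map_mx Num.conj) det_tr. Qed.

Definition omega_unitary (M : 'M[C]_2) := unitarymx M /\ exists k, \det M = om ^+ k.

Lemma omega_unitary_omegaI : omega_unitary (mxOmegaI R).
Proof.
split; last by exists 2%N; rewrite /mxOmegaI det_scalar.
by rewrite /unitarymx /mxOmegaI ctmx_scalar -scalar_mxM mulrC omega_mulJ.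
Qed.

Lemma omega_unitary_S : omega_unitary (mxS R).
Proof.
rewrite (_ : mxS R = diag2 1 'i) //; split; last first.
  by exists 2%N; rewrite det_diag2 mul1r omega_sqr.
apply: diag2_unitary; first by rewrite conjC1 mulr1.
by rewrite -omega_sqr rmorphXn /= -exprMn omega_mulJ expr1n.
Qed.

Lemma omega_unitary_T : omega_unitary (mxT R).
Proof.
rewrite (_ : mxT R = diag2 1 om) //; split; last first.
  by exists 1%N; rewrite det_diag2 mul1r expr1.
by apply: diag2_unitary; rewrite ?conjC1 ?mulr1 // omega_mulJ.
Qed.

Lemma omega_unitary_H : omega_unitary (mxH R).
Proof.
have hs : (Num.sqrt (2 : R))^-1 * (Num.sqrt (2 : R))^-1 = 1 / 2.
  by rewrite -invfM -expr2 sqr_sqrtr ?div1r //; lra.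
split; last first.
  exists 4%N; rewrite det_mx2 !mxE /= omega4.
  by apply: complex_eq => /=; nra.
apply/matrixP => i j; rewrite !mxE big_ord2 !mxE.
by have [->|->] := ord2P i; have [->|->] := ord2P j => /=; apply: complex_eq => /=; nra.
Qed.

Lemma omega_unitary_mul (A B : 'M[C]_2) :
  omega_unitary A -> omega_unitary B -> omega_unitary (A *m B).
Proof.
move=> [hA [k hk]] [hB [l hl]]; split; first exact: unitarymx_mul.
by exists (k + l)%N; rewrite det_mulmx hk hl exprD.
Qed.

Lemma omega_unitary_inv (A : 'M[C]_2) : omega_unitary A -> omega_unitary (invmx A).
Proof.
move=> [hA [k hk]]; rewrite invmx_unitary //; split; first exact: unitarymx_ctmx.
exists (7 * k)%N; rewrite ctmx_det hk rmorphXn /=.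
apply: (mulIf (expf_neq0 k omega_neq0)); rewrite -exprMn mulrC omega_mulJ expr1n.
by rewrite -exprD -mulSnr exprM omega8 expr1n.
Qed.

Lemma omega_unitary_letter (l : letter) : omega_unitary (letter_mx R l).
Proof.
have hg (g : gen) : omega_unitary (gen_mx R g).
  case: g; [exact: omega_unitary_omegaI | exact: omega_unitary_H
           | exact: omega_unitary_S | exact: omega_unitary_T].
by case: l => g [] /=; [apply: omega_unitary_inv|]; apply: hg.
Qed.

Lemma omega_unitary_word (w : seq letter) : omega_unitary (word_mx R w).
Proof.
elim: w => [|l w IHw] /=; last exact: omega_unitary_mul (omega_unitary_letter l) IHw.
by split; [exact: unitarymx1 | exists 0%N; rewrite det1].
Qed.

Lemma word_mx_omega_prefix j w :
  word_mx R (nseq j (GOmega, false) ++ w) = om ^+ j *: word_mx R w.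
Proof.
elim: j => [|j IHj] /=; first by rewrite expr0 scale1r.
by rewrite IHj /letter_mx /= /mxOmegaI mul_scalar_mx scalerA exprS.
Qed.

Lemma word_mx_omegaV_prefix j w :
  word_mx R (nseq j (GOmega, true) ++ w) = om^-1 ^+ j *: word_mx R w.
Proof.
elim: j => [|j IHj] /=; first by rewrite expr0 scale1r.
by rewrite IHj /letter_mx /= /mxOmegaI invmx_scalar mul_scalar_mx scalerA exprS.
Qed.

Lemma word_tcount_omega_prefix j b w :
  word_tcount (nseq j (GOmega, b) ++ w) = word_tcount w.
Proof. by rewrite /word_tcount count_cat count_nseq mul0n. Qed.

Lemma is_tcount_omegaZ j (U : 'M[C]_2) n :
  is_tcount U n <-> is_tcount (om ^+ j *: U) n.
Proof.
have omVK : om^-1 ^+ j * om ^+ j = 1 by rewrite -exprMn mulVf ?omega_neq0 // expr1n.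
split=> [] [[w [hw hn]] hmin]; split.
- by exists (nseq j (GOmega, false) ++ w); rewrite word_mx_omega_prefix hw word_tcount_omega_prefix.
- move=> w' hw'; rewrite -(word_tcount_omega_prefix j true); apply: hmin.
  by rewrite word_mx_omegaV_prefix hw' scalerA omVK scale1r.
- exists (nseq j (GOmega, true) ++ w).
  by rewrite word_mx_omegaV_prefix hw scalerA omVK scale1r word_tcount_omega_prefix.
- move=> w' hw'; rewrite -(word_tcount_omega_prefix j false); apply: hmin.
  by rewrite word_mx_omega_prefix hw'.
Qed.

Lemma Rz_diag2 (th : R) : Rz th = diag2 (expi (- (th / 2))) (expi (th / 2)).
Proof. by []. Qed.

Lemma Rz_unitary (th : R) : unitarymx (Rz th).
Proof. by rewrite Rz_diag2; apply: diag2_unitary; exact: expi_mulJ. Qed.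

Lemma Rz_det (th : R) : \det (Rz th) = 1.
Proof. by rewrite Rz_diag2 det_diag2 -expiD addNr expi0. Qed.

Lemma phase_choice (P U : 'M[C]_2) k :
  \det P = 1 -> \det U = om ^+ k ->
  exists m, \det (zeta ^+ m *: (ctmx P *m U)) = 1 /\
            0 <= complex.Re (\tr (zeta ^+ m *: (ctmx P *m U))).
Proof.
move=> hP hU.
have hdet j : \det (zeta ^+ (7 * k + 8 * j) *: (ctmx P *m U)) = 1.
  rewrite detZ det_mulmx ctmx_det hP rmorph1 mul1r hU -zeta_sqr -!exprM -exprD.
  have -> : ((7 * k + 8 * j) * 2 + 2 * k = 16 * (k + j))%N by ring.
  by rewrite exprM zeta16 expr1n.
have [hre|hre] := leP 0 (complex.Re (\tr (zeta ^+ (7 * k + 8 * 0) *: (ctmx P *m U)))).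
  by exists (7 * k + 8 * 0)%N.
exists (7 * k + 8 * 1)%N; split=> //.
rewrite addn0 in hre; rewrite exprD zeta8 mulrN1 scaleNr raddfN raddfN /=.
by rewrite oppr_ge0 ltW.
Qed.
End CliffordTPhase.

Unset Implicit Arguments.

Theorem corollary7p20 (R : realType) (theta eps : R) (heps : 0 < eps)
    (U : 'M[R[i]]_2) (lambda : R[i]) :
  clifford_t U -> cmod lambda = 1 ->
  opnorm (Rz theta - lambda *: U) <= eps ->
  exists (lambda' : R[i]) (U' : 'M[R[i]]_2),
    (lambda' = 1 \/ lambda' = expi (pi / 8)) /\
    clifford_t U' /\
    (forall n : nat, is_tcount U n <-> is_tcount U' n) /\
    opnorm (Rz theta - lambda' *: U') <= eps.
Proof.
move=> [w hw] hlam hdist.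
have [hU [k hk]] : omega_unitary U by rewrite -hw; exact: omega_unitary_word.
have [m [hdet hre]] := phase_choice (Rz_det theta) hk.
exists (expi (pi / 8) ^+ odd m), (omega R ^+ m./2 *: U).
split; first by case: (odd m); [right; rewrite expr1 | left; rewrite expr0].
split; first by exists (nseq m./2 (GOmega, false) ++ w); rewrite word_mx_omega_prefix hw.
split; first by move=> n; exact: is_tcount_omegaZ.
rewrite scalerA zetaX_split; apply: le_trans _ hdist.
exact: opnorm_sub_phase_le (Rz_unitary theta) hU (zetaX_mulJ R m) (cmod1_mulJ hlam) hdet hre.
Qed.
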